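(* For every $n\in\mathbb{N}$ there exists a strongly well-connected $3n$-regular oriented graph on $18n+5$ vertices with no Hamilton cycle.
   Context: An oriented graph has at most one edge between any two vertices; $d$-regular means every vertex has in- and outdegree exactly $d$. A digraph $G$ on at least four vertices is strongly well-connected if for every partition $(A,B)$ of $V(G)$ with $|A|,|B|\geq 2$ there exist two edges $ab$ and $cd$ with no common vertex such that $a,d\in A$ and $b,c\in B$. A Hamilton cycle is a directed cycle through all vertices. *)

From mathcomp Require Import all_boot.
Set Implicit Arguments. Unset Strict Implicit. Unset Printing Implicit Defensive.

Definition oriented (V : finType) (e : rel V) : Prop :=
  (forall x, ~~ e x x) /\ (forall x y, ~~ (e x y && e y x)).

Definition regular (V : finType) (e : rel V) (d : nat) : Prop :=
  forall x, #|[set y | e x y]| = d /\ #|[set y | e y x]| = d.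

Definition strongly_well_connected (V : finType) (e : rel V) : Prop :=
  4 <= #|V| /\
  forall A : {set V}, 2 <= #|A| -> 2 <= #|~: A| ->
    exists a b c d : V,
      [/\ a \in A, d \in A, b \notin A & c \notin A] /\
      [/\ e a b, e c d & [disjoint [set a; b] & [set c; d]]].

Definition hamiltonian (V : finType) (e : rel V) : Prop :=
  exists s : seq V, [/\ uniq s, size s = #|V| & cycle e s].

(* The digraph has three blocks and two hubs U, W.  Each block is the circulant
   tournament on 6n+1 vertices (position i beats i+1, ..., i+3n) minus the 2n arcs
   i -> i+3n with i < 2n; U receives from positions [0, n) and sends to [3n, 4n) of
   every block, W receives from [n, 2n) and sends to [4n, 5n), which restores
   3n-regularity.
   A Hamilton cycle has to leave each block, and only the hubs lie outside the
   blocks; as its successor map is injective, three blocks would need three hubs.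
   Deleting both ends of an arc leaves the digraph strongly connected, except for a
   matching of arcs when n = 1: a block minus two vertices is still traversed by
   steps of length at most 3, and every block keeps arcs to and from a surviving hub.
   Given a cut (A, B), paths across it avoiding a spare arc yield crossing arcs in
   both directions; deleting the ends of a non-exceptional one, a further path yields
   an opposite crossing arc disjoint from it. *)

From mathcomp Require Import all_boot zify.
From Stdlib Require Import Relation_Operators Operators_Properties.
Set Implicit Arguments. Unset Strict Implicit. Unset Printing Implicit Defensive.

(** * Hamilton cycles and robust cuts *)

Section Digraphs.
Variables (V : finType) (e : rel V).

Lemma connect_exit (r : rel V) (A : {pred V}) x y :
  connect r x y -> x \in A -> y \notin A -> exists u v, [/\ r u v, u \in A & v \notin A].
Proof.
case/connectP=> p; elim: p x => [|z p IHp] x /=; first by move=> _ -> ->.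
case/andP=> rxz rp y_last xA yA; case: (boolP (z \in A)) => zA; last by exists x, z.
exact: IHp rp y_last zA yA.
Qed.

Lemma hamiltonian_successor : hamiltonian e ->
  exists f : V -> V, [/\ injective f, forall x, e x (f x) & forall x y, fconnect f x y].
Proof.
case=> s [uniq_s size_s cycle_e_s].
have s_full x : x \in s.
  have /subset_cardP s_eq : #|s| = #|predT : {pred V}|.
    by rewrite (card_uniqP uniq_s) size_s.
  by rewrite (s_eq (subset_predT _)).
exists (next s); split.
- exact: can_inj (prev_next uniq_s).
- by move=> x; apply: next_cycle cycle_e_s (s_full x).
- by move=> x y; rewrite (fconnect_cycle (cycle_next uniq_s) (s_full x)) s_full.
Qed.

Lemma not_hamiltonian_bottleneck k (B : 'I_k -> {set V}) (H : {set V}) :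
  (forall i j, i != j -> [disjoint B i & B j]) ->
  (forall i, exists x, x \in B i) -> (forall i, exists y, y \notin B i) ->
  (forall i x y, x \in B i -> e x y -> y \in B i :|: H) ->
  #|H| < k -> ~ hamiltonian e.
Proof.
move=> disjB inB outB exitB ltHk /hamiltonian_successor[f [inj_f e_f conn_f]].
have exit_to_H i : exists x, (x \in B i) && (f x \in H).
  have [[x xB] [y yB]] := (inB i, outB i).
  have [u [v [/eqP <- uB fuB]]] := connect_exit (conn_f x y) xB yB.
  by exists u; move: (exitB i u _ uB (e_f u)); rewrite inE (negbTE fuB) uB.
have [g gP] := fin_all_exists exit_to_H.
have inj_fg : injective (f \o g).
  move=> i j /= /inj_f gij; apply/eqP; apply: contraT => /disjB /disjointFr.
  case/andP: (gP i) => giB _ /(_ _ giB); rewrite gij.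
  by case/andP: (gP j) => ->.
suff : k <= #|H| by rewrite leqNgt ltHk.
rewrite -[k]card_ord -(card_imset _ inj_fg); apply/subset_leq_card/subsetP.
by move=> _ /imsetP[i _ ->]; case/andP: (gP i).
Qed.

Definition induced (S : {set V}) : rel V := [rel x y | [&& e x y, x \in S & y \in S]].

Definition two_way_cut (A : {set V}) := exists a b c d : V,
  [/\ a \in A, d \in A, b \notin A & c \notin A] /\
  [/\ e a b, e c d & [disjoint [set a; b] & [set c; d]]].

Lemma two_way_cutC A : two_way_cut (~: A) -> two_way_cut A.
Proof.
case=> a [b [c [d [[aA dA bA cA] [ab cd abcd]]]]].
move: aA dA bA cA; rewrite !inE !negbK => aA dA bA cA.
by exists c, d, a, b; split; split; rewrite // disjoint_sym.
Qed.

Lemma disjoint_set2 (a b : V) (S : {set V}) :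
  [disjoint [set a; b] & S] = (a \notin S) && (b \notin S).
Proof. by rewrite -setI_eq0 setIUl setU_eq0 !setI_eq0 !disjoints1. Qed.

Lemma exists_other (A : {set V}) x : 1 < #|A| -> exists2 y, y \in A & y != x.
Proof.
case/card_gt1P=> u [v [uA vA uv]]; case: (eqVneq u x) => [<-|ux]; last by exists u.
by exists v; rewrite // eq_sym.
Qed.

Variable fragile : rel V.

Hypothesis robust : forall a b, e a b -> ~~ fragile a b -> forall x y,
  x \notin [set a; b] -> y \notin [set a; b] -> connect (induced (~: [set a; b])) x y.
Hypothesis spare_edge : forall x y,
  exists a b, [/\ e a b, ~~ fragile a b & [disjoint [set a; b] & [set x; y]]].
Hypothesis fragile_matching : forall a b c d, fragile a b -> fragile c d ->
  ~~ [disjoint [set a; b] & [set c; d]] -> (a, b) = (c, d).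

Lemma induced_exit (S A : {set V}) x y :
  connect (induced S) x y -> x \in A -> y \notin A ->
  exists c d, [/\ e c d, c \in S, d \in S, c \in A & d \notin A].
Proof.
move=> /connect_exit/[apply]/[apply] [[c [d [/and3P[cd cS dS] cA dA]]]].
by exists c, d.
Qed.

Lemma two_way_cut_of_robust_edge (A : {set V}) c d :
  1 < #|A| -> 1 < #|~: A| -> e c d -> ~~ fragile c d -> c \in A -> d \notin A ->
  two_way_cut A.
Proof.
move=> A_gt1 Ac_gt1 cd robust_cd cA dA.
have [a aA ac] := exists_other c A_gt1.
have [b bA bd] := exists_other d Ac_gt1.
have a_cd : a \notin [set c; d] by rewrite !inE negb_or ac; apply: contraTneq aA => ->.
have b_cd : b \notin [set c; d].
  by rewrite !inE negb_or bd andbT; apply: contraTneq bA => ->; rewrite inE negbK.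
have aAc : a \notin ~: A by rewrite inE negbK.
have [u [v [uv u_cd v_cd uA vA]]] := induced_exit (robust cd robust_cd b_cd a_cd) bA aAc.
move: uA vA; rewrite !inE negbK => uA vA.
exists c, d, u, v; do 2!split=> //.
by rewrite disjoint_sym disjoint_set2 -!in_setC u_cd v_cd.
Qed.

Lemma strongly_well_connected_of_robust : 4 <= #|V| -> strongly_well_connected e.
Proof.
move=> V_ge4; split=> // A A_gt1 Ac_gt1.
have /card_gt1P[a [_ [aA _ _]]] := A_gt1.
have /card_gt1P[b [_ [bAc _ _]]] := Ac_gt1.
have aAc : a \notin ~: A by rewrite inE negbK.
have bA : b \notin A by rewrite inE in bAc.
have [p [q [pq robust_pq]]] := spare_edge a b.
rewrite disjoint_sym disjoint_set2 => /andP[a_pq b_pq].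
have [c1 [d1 [c1d1 _ _ c1A d1A]]] := induced_exit (robust pq robust_pq a_pq b_pq) aA bA.
have [c2 [d2 [c2d2 _ _ c2Ac d2Ac]]] := induced_exit (robust pq robust_pq b_pq a_pq) bAc aAc.
have [robust1|] := boolP (~~ fragile c1 d1).
  exact: two_way_cut_of_robust_edge A_gt1 Ac_gt1 c1d1 robust1 c1A d1A.
have [robust2 _|] := boolP (~~ fragile c2 d2).
  by apply/two_way_cutC/(two_way_cut_of_robust_edge _ _ c2d2 robust2 c2Ac d2Ac);
    rewrite ?setCK.
rewrite !negbK => frag2 frag1.
move: c2Ac d2Ac; rewrite !inE negbK => c2A d2A.
exists c1, d1, c2, d2; do 2!split=> //.
apply: contraT => /(fragile_matching frag1 frag2) [c12 _].
by move: c1A; rewrite c12 (negbTE c2A).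
Qed.

End Digraphs.

(** * Counting on initial segments of nat *)

Lemma card_ord_pred N (P : pred nat) : #|[set y : 'I_N | P y]| = count P (iota 0 N).
Proof.
rewrite cardsE cardE /enum_mem size_filter -val_enum_ord count_map enumT.
by apply: eq_count => y; rewrite !inE.
Qed.

Lemma count_range a b L : count (fun j => a <= j < b) (iota 0 L) = minn b L - a.
Proof.
elim: L => [|L IHL]; first by rewrite minn0.
by rewrite -addn1 iotaD count_cat IHL /= add0n addn0; case: (leqP a L); case: (ltnP L b); lia.
Qed.

Lemma count_eq_and k (b : bool) N : count (fun y => (y == k) && b) (iota 0 N) = (k < N) && b.
Proof.
rewrite (@eq_count _ _ (fun y => k <= y < (k.+1 * b))) ?count_range; last by move=> y; case: b; lia.
by case: b; case: ltnP; lia.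
Qed.

Lemma count_predU_disjoint (T : Type) (p q : pred T) s : (forall x, ~~ (p x && q x)) ->
  count (fun x => p x || q x) s = count p s + count q s.
Proof.
move=> pq_disj; rewrite -count_predUI (@eq_count _ (predI p q) pred0) ?count_pred0 ?addn0 //.
by move=> x /=; apply/negbTE.
Qed.

Lemma count_shift (Q : pred nat) lo L N : lo + L <= N ->
  count (fun y => (lo <= y < lo + L) && Q (y - lo)) (iota 0 N) = count Q (iota 0 L).
Proof.
move=> le_N; have -> : N = lo + (L + (N - lo - L)) by lia.
rewrite !iotaD !count_cat add0n -[X in iota X L]addn0 iotaDl count_map.
rewrite (@eq_in_count _ _ pred0 (iota 0 lo)); last by move=> y; rewrite mem_iota /=; lia.
rewrite (@eq_in_count _ _ pred0 (iota (lo + L) _)); last by move=> y; rewrite mem_iota /=; lia.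
rewrite !count_pred0 add0n addn0; apply: eq_in_count => y; rewrite mem_iota /= addKn.
by case: (Q y); lia.
Qed.

Section Construction.
Variable n : nat.
Local Notation m := (6 * n + 1).
Local Notation N := (18 * n + 5).
Local Notation hubU := (3 * m).
Local Notation hubW := (3 * m + 1).
Local Notation block_start o := [|| o == 0, o == m | o == 2 * m].

(* Vertices are numbered so that block o, for o in {0, m, 2m}, consists of o + i for
   the positions i < m; the hubs are U = 3m and W = 3m + 1. *)

Definition circulant i j := (i < j <= i + 3 * n) || (j + m <= i + 3 * n).
Definition block_edge i j := circulant i j && ~~ ((i < 2 * n) && (j == i + 3 * n)).
Definition block_adj o x y := [&& o <= x < o + m, o <= y < o + m & block_edge (x - o) (y - o)].
Definition at_position lo hi x :=
  [|| lo <= x < hi, m + lo <= x < m + hi | 2 * m + lo <= x < 2 * m + hi].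
Definition adj x y :=
  [|| block_adj 0 x y, block_adj m x y, block_adj (2 * m) x y,
      (y == hubU) && at_position 0 n x, (y == hubW) && at_position n (2 * n) x,
      (x == hubU) && at_position (3 * n) (4 * n) y | (x == hubW) && at_position (4 * n) (5 * n) y].

Lemma block_adj_outside o x y : ~~ (o <= x < o + m) || ~~ (o <= y < o + m) ->
  block_adj o x y = false.
Proof. by rewrite /block_adj; case: (o <= x < o + m); case: (o <= y < o + m). Qed.

Lemma at_position_block o i lo hi : block_start o -> i < m -> hi <= m ->
  at_position lo hi (o + i) = (lo <= i < hi).
Proof. by move=> o_start lt_im hi_le; rewrite /at_position; apply/idP/idP; lia. Qed.

Lemma block_adj_from o o' i y : block_start o -> block_start o' -> i < m ->
  block_adj o' (o + i) y = (o' == o) && (o <= y < o + m) && block_edge i (y - o).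
Proof.
move=> o_start o'_start lt_im; have [-> | ne_o'o] := eqVneq o' o; last by apply: block_adj_outside; lia.
by rewrite /block_adj addKn leq_addr ltn_add2l lt_im.
Qed.

Lemma block_adj_to o o' i x : block_start o -> block_start o' -> i < m ->
  block_adj o' x (o + i) = (o' == o) && (o <= x < o + m) && block_edge (x - o) i.
Proof.
move=> o_start o'_start lt_im; have [-> | ne_o'o] := eqVneq o' o; last by apply: block_adj_outside; lia.
by rewrite /block_adj addKn leq_addr ltn_add2l lt_im andbT.
Qed.

Lemma adj_from_block o i : block_start o -> i < m ->
  adj (o + i) =1 fun y => [|| (o <= y < o + m) && block_edge i (y - o),
                      (y == hubU) && (i < n) | (y == hubW) && (n <= i < 2 * n)].
Proof.
move=> o_start lt_im y; rewrite /adj !at_position_block // ?(block_adj_from _ o_start) //; lia.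
Qed.

Lemma adj_to_block o i : block_start o -> i < m ->
  adj^~ (o + i) =1 fun x => [|| (o <= x < o + m) && block_edge (x - o) i,
                      (x == hubU) && (3 * n <= i < 4 * n) | (x == hubW) && (4 * n <= i < 5 * n)].
Proof.
move=> o_start lt_im y; rewrite /adj !at_position_block // ?(block_adj_to _ o_start) //; lia.
Qed.

Lemma adj_from_hubU : adj hubU =1 at_position (3 * n) (4 * n).
Proof. move=> y; by rewrite /adj !block_adj_outside /at_position; lia. Qed.

Lemma adj_from_hubW : adj hubW =1 at_position (4 * n) (5 * n).
Proof. move=> y; by rewrite /adj !block_adj_outside /at_position; lia. Qed.

Lemma adj_to_hubU : adj^~ hubU =1 at_position 0 n.
Proof. move=> x; by rewrite /adj !block_adj_outside /at_position; lia. Qed.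

Lemma adj_to_hubW : adj^~ hubW =1 at_position n (2 * n).
Proof. move=> x; by rewrite /adj !block_adj_outside /at_position; lia. Qed.

Lemma count_block_out i : i < m -> count (block_edge i) (iota 0 m) = 3 * n - (i < 2 * n).
Proof.
move=> lt_im.
rewrite (@eq_in_count _ _ (fun j => (i < j < i + 3 * n + (2 * n <= i)) || (0 <= j < i + 3 * n + 1 - m))).
  by rewrite count_predU_disjoint ?count_range; lia.
by move=> j; rewrite mem_iota /block_edge /circulant; lia.
Qed.

Lemma count_block_in i : i < m ->
  count (block_edge^~ i) (iota 0 m) = 3 * n - (3 * n <= i < 5 * n).
Proof.
move=> lt_im.
rewrite (@eq_in_count _ _ (fun j => (i - 3 * n + (3 * n <= i < 5 * n) <= j < i) || (i + m - 3 * n <= j < m))).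
  by rewrite count_predU_disjoint ?count_range; lia.
by move=> j; rewrite mem_iota /block_edge /circulant; lia.
Qed.

Lemma count_at_position lo hi : lo <= hi <= m ->
  count (at_position lo hi) (iota 0 N) = 3 * (hi - lo).
Proof. by move=> lohi; rewrite /at_position !count_predU_disjoint ?count_range; lia. Qed.

Variant vertex_spec x : Prop :=
  | VertexBlock o i of block_start o & i < m & x = o + i
  | VertexHubU of x = hubU
  | VertexHubW of x = hubW.

Lemma vertexP x : x < N -> vertex_spec x.
Proof.
move=> lt_xN.
have [lt_x1 | ge_x1] := ltnP x m; first by apply: (@VertexBlock _ 0 x); rewrite ?eqxx.
have [lt_x2 | ge_x2] := ltnP x (2 * m).
  by apply: (@VertexBlock _ m (x - m)); rewrite ?eqxx ?orbT //; lia.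
have [lt_x3 | ge_x3] := ltnP x (3 * m).
  by apply: (@VertexBlock _ (2 * m) (x - 2 * m)); rewrite ?eqxx ?orbT //; lia.
by have [/eqP -> | ne_xU] := boolP (x == hubU); [apply: VertexHubU | apply: VertexHubW; lia].
Qed.

Lemma count_adj_from x : x < N -> count (adj x) (iota 0 N) = 3 * n.
Proof.
case/vertexP=> [o i o_start lt_im -> | -> | ->].
- rewrite (eq_count (adj_from_block o_start lt_im)) !count_predU_disjoint; try lia.
  by rewrite count_shift ?count_block_out ?count_eq_and //; lia.
- by rewrite (eq_count adj_from_hubU) count_at_position; lia.
- by rewrite (eq_count adj_from_hubW) count_at_position; lia.
Qed.

Lemma count_adj_to x : x < N -> count (adj^~ x) (iota 0 N) = 3 * n.
Proof.
case/vertexP=> [o i o_start lt_im -> | -> | ->].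
- rewrite (eq_count (adj_to_block o_start lt_im)) !count_predU_disjoint; try lia.
  by rewrite (count_shift (block_edge^~ i)) ?count_block_in ?count_eq_and //; lia.
- by rewrite (eq_count adj_to_hubU) count_at_position; lia.
- by rewrite (eq_count adj_to_hubW) count_at_position; lia.
Qed.

Lemma adj_bounded x y : adj x y -> (x < N) && (y < N).
Proof. by rewrite /adj /block_adj /at_position; lia. Qed.

Lemma adj_asym x y : ~~ (adj x y && adj y x).
Proof.
apply/negP=> /andP[adj_xy adj_yx]; have /andP[lt_xN _] := adj_bounded adj_xy.
case: (vertexP lt_xN) adj_xy adj_yx => [o i o_start lt_im -> | -> | ->].
- rewrite adj_from_block // adj_to_block // /block_edge /circulant; lia.
- by rewrite adj_from_hubU adj_to_hubU /at_position; lia.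
- by rewrite adj_from_hubW adj_to_hubW /at_position; lia.
Qed.

Lemma adj_block_closed o x y : block_start o -> o <= x < o + m -> adj x y -> y < 3 * m ->
  o <= y < o + m.
Proof.
move=> o_start x_in; have -> : x = o + (x - o) by lia.
by rewrite adj_from_block //; lia.
Qed.

Definition graph : rel 'I_N := fun x y => adj x y.

Lemma graph_regular : regular graph (3 * n).
Proof.
move=> x; rewrite (card_ord_pred _ (adj x)) (card_ord_pred _ (adj^~ x)).
by rewrite count_adj_from ?count_adj_to.
Qed.

Lemma graph_oriented : oriented graph.
Proof. by split=> [x | x y]; [rewrite -[graph x x]andbb |]; apply: adj_asym. Qed.

Lemma block_start_index (k : 'I_3) : block_start (k * m).
Proof. by case: k => [[|[|[|k]]] //= _]; rewrite ?mul0n ?mul1n eqxx ?orbT. Qed.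

Lemma graph_not_hamiltonian : ~ hamiltonian graph.
Proof.
pose block (k : 'I_3) := [set x : 'I_N | k * m <= x < k * m + m].
pose hubs := [set x : 'I_N | 3 * m <= x].
have lt_hubU : hubU < N by lia.
apply: (@not_hamiltonian_bottleneck _ _ 3 block hubs).
- move=> k k' ne_kk'; rewrite -setI_eq0; apply/eqP/setP=> x; rewrite !inE; apply/negbTE.
  move: ne_kk' (ltn_ord k) (ltn_ord k'); rewrite -(inj_eq val_inj) /=.
  by case: (nat_of_ord k) => [|[|[|?]]]; case: (nat_of_ord k') => [|[|[|?]]]; lia.
- move=> k; have lt_kmN : k * m < N by have := ltn_ord k; nia.
  by exists (Ordinal lt_kmN); rewrite inE /=; lia.
- by move=> k; exists (Ordinal lt_hubU); rewrite inE /=; have := ltn_ord k; nia.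
- move=> k x y; rewrite !inE => x_in adj_xy.
  have [lt_y3m | _] := ltnP y (3 * m); last by rewrite orbT.
  by rewrite (adj_block_closed (block_start_index k) x_in adj_xy lt_y3m).
- rewrite /hubs card_ord_pred (@eq_in_count _ _ (fun y => 3 * m <= y < N)).
    by rewrite count_range; lia.
  by move=> y; rewrite mem_iota; lia.
Qed.

(** * Robust connectivity *)

Variant adj_spec x y : Prop :=
  | AdjInBlock o of block_start o & o <= x < o + m & o <= y < o + m & block_edge (x - o) (y - o)
  | AdjToHubU of y = hubU & at_position 0 n x
  | AdjToHubW of y = hubW & at_position n (2 * n) x
  | AdjFromHubU of x = hubU & at_position (3 * n) (4 * n) y
  | AdjFromHubW of x = hubW & at_position (4 * n) (5 * n) y.

Lemma adjP x y : adj x y -> adj_spec x y.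
Proof.
have in_block o : block_start o -> block_adj o x y -> adj_spec x y.
  by move=> o_start /and3P[]; apply: AdjInBlock.
case/orP=> [adj_xy|/orP[adj_xy|/orP[adj_xy|]]]; try by apply: in_block adj_xy; rewrite ?eqxx ?orbT.
by case/orP=> [|/orP[|/orP[|]]] /andP[/eqP-> pos]; constructor.
Qed.

Local Notation cyc_at i k j := ((j%N == i + k) || (j + m == i + k)).

Lemma cyclic_pred j : j < m -> exists2 j', j' < m & cyc_at j' 1 j.
Proof. by move=> lt_jm; case: (posnP j) => j0; [exists (m - 1) | exists (j - 1)]; lia. Qed.

Lemma cyc_at_pos i j k : i < m -> j < m -> j != i -> cyc_at i k j -> 0 < k.
Proof. lia. Qed.

Lemma cyc_at_pred i j j' k : j' < m -> 0 < k -> cyc_at i k j -> cyc_at j' 1 j -> cyc_at i k.-1 j'.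
Proof. lia. Qed.

Lemma cyc_at_add x y z d d' : x < m -> y < m -> z < m -> d + d' < m ->
  cyc_at x d y -> cyc_at y d' z -> cyc_at x (d + d') z.
Proof. lia. Qed.

Lemma cyc_at_neq x y d : x < m -> y < m -> 0 < d < m -> cyc_at x d y -> x != y.
Proof. lia. Qed.

Lemma cyc_at_three x y : n = 1 -> x < 2 -> y < m -> cyc_at x 3 y -> y = x + 3.
Proof. lia. Qed.

Lemma block_step3_cond x : 0 < n -> ~~ ((n == 1) && (x < 2)) -> (3 < 3 * n) || (3 == 3 * n) && (2 * n <= x).
Proof. lia. Qed.

Lemma block_edge_cyc i j d : i < m -> j < m -> cyc_at i d j ->
  0 < d -> (d < 3 * n) || (d == 3 * n) && (2 * n <= i) -> block_edge i j.
Proof. by rewrite /block_edge /circulant; lia. Qed.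

Lemma adj_block_block o i j : block_start o -> i < m -> j < m -> adj (o + i) (o + j) = block_edge i j.
Proof. by move=> o_start lt_im lt_jm; rewrite adj_from_block // addKn; case: block_edge; lia. Qed.

Lemma adj_block_hubU o i : block_start o -> i < m -> adj (o + i) hubU = (i < n).
Proof. by move=> o_start lt_im; rewrite adj_to_hubU at_position_block //; lia. Qed.

Lemma adj_block_hubW o i : block_start o -> i < m -> adj (o + i) hubW = (n <= i < 2 * n).
Proof. by move=> o_start lt_im; rewrite adj_to_hubW at_position_block //; lia. Qed.

Lemma adj_hubU_block o i : block_start o -> i < m -> adj hubU (o + i) = (3 * n <= i < 4 * n).
Proof. by move=> o_start lt_im; rewrite adj_from_hubU at_position_block //; lia. Qed.

Lemma adj_hubW_block o i : block_start o -> i < m -> adj hubW (o + i) = (4 * n <= i < 5 * n).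
Proof. by move=> o_start lt_im; rewrite adj_from_hubW at_position_block //; lia. Qed.

Lemma adj_hubs : adj hubU hubW = false /\ adj hubW hubU = false.
Proof. by rewrite adj_from_hubU adj_from_hubW /at_position; split; lia. Qed.

(* For n = 1, deleting the ends of o -> o + 1 (resp. o + 3n -> o + 3n + 1) cuts block o
   off from both hubs in the outgoing (resp. incoming) direction. *)
Definition fragile a b := [&& n == 1, b == a + 1 &
  [|| a == 0, a == 3 * n, a == m, a == m + 3 * n, a == 2 * m | a == 2 * m + 3 * n]].

Section Robustness.

Hypothesis n_gt0 : 0 < n.
Variables a b : nat.
Definition kept x := (x != a) && (x != b).

Hypothesis adj_ab : adj a b.
Hypothesis robust_ab : ~~ fragile a b.

Lemma small_lt_m d : d <= 3 -> d < m.
Proof. lia. Qed.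

Lemma small_lt_3n d : d < 3 -> d < 3 * n.
Proof. lia. Qed.

Lemma kept_hub o i i' h : block_start o -> i < m -> i' < m -> o + i != o + i' ->
  ~~ kept (o + i) -> ~~ kept (o + i') -> 3 * m <= h -> kept h.
Proof. rewrite /kept; lia. Qed.

Definition avoid_adj x y := [&& adj x y, kept x & kept y].
Local Notation reach := (clos_refl_trans nat avoid_adj).

Lemma reach_adj x y : adj x y -> kept x -> kept y -> reach x y.
Proof. by move=> adj_xy kept_x kept_y; apply: rt_step; apply/and3P. Qed.

Lemma reach_via h x y : adj x h -> adj h y -> kept x -> kept h -> kept y -> reach x y.
Proof. by move=> adj_xh adj_hy *; apply: rt_trans (reach_adj adj_xh _ _) (reach_adj adj_hy _ _). Qed.

Lemma kept_other x y z : ~~ kept x -> ~~ kept y -> x != y -> z != x -> z != y -> kept z.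
Proof. rewrite /kept; lia. Qed.

Lemma reach_hub_detour o j : n = 1 -> block_start o -> j < 2 ->
  kept (o + j) -> kept (o + j + 3) -> kept hubU -> kept hubW -> reach (o + j) (o + j + 3).
Proof.
move=> n1 o_start lt_j2 kept_j kept_j3 kept_U kept_W.
have [j0 | j1] : j = 0 \/ j = 1 by lia.
- by apply: (@reach_via hubU); rewrite // ?adj_to_hubU ?adj_from_hubU /at_position; lia.
- by apply: (@reach_via hubW); rewrite // ?adj_to_hubW ?adj_from_hubW /at_position; lia.
Qed.

Lemma reach_block_edge o i j : block_start o -> i < m -> j < m -> block_edge i j ->
  kept (o + i) -> kept (o + j) -> reach (o + i) (o + j).
Proof. by move=> o_start lt_im lt_jm edge_ij; apply: reach_adj; rewrite adj_block_block. Qed.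

(* Walk backwards from j: the nearest kept predecessor lies at most 3 positions back;
   steps 1 and 2 are block arcs, and so is a step 3 unless n = 1 and it starts at
   position 0 or 1, where a hub gives a detour. *)
Lemma reach_in_block o i j : block_start o -> i < m -> j < m ->
  kept (o + i) -> kept (o + j) -> reach (o + i) (o + j).
Proof.
move=> o_start lt_im lt_jm kept_i kept_j.
have [k j_at] : exists k, cyc_at i k j.
  by case: (leqP i j) => ?; [exists (j - i) | exists (j + m - i)]; lia.
elim/ltn_ind: k j lt_jm j_at kept_j => k IHk j lt_jm j_at kept_j.
have [-> | ne_ji] := eqVneq j i; first exact: rt_refl.
have k_gt0 := cyc_at_pos lt_im lt_jm ne_ji j_at.
have [j1 lt_j1m j1_j] := cyclic_pred lt_jm.
have j1_at := cyc_at_pred lt_j1m k_gt0 j_at j1_j.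
have lt_k1 : k.-1 < k by rewrite ltn_predL.
have [kept_j1 | del_j1] := boolP (kept (o + j1)).
  apply: rt_trans (IHk _ lt_k1 _ lt_j1m j1_at kept_j1) (reach_block_edge o_start _ _ _ _ _) => //.
  by apply: (block_edge_cyc lt_j1m lt_jm j1_j) => //; rewrite small_lt_3n.
have ne_j1i : j1 != i by apply: contraNneq del_j1 => ->.
have k1_gt0 := cyc_at_pos lt_im lt_j1m ne_j1i j1_at.
have [j2 lt_j2m j2_j1] := cyclic_pred lt_j1m.
have j2_at := cyc_at_pred lt_j2m k1_gt0 j1_at j2_j1.
have j2_j : cyc_at j2 (1 + 1) j by apply: cyc_at_add j2_j1 j1_j => //; rewrite small_lt_m.
have lt_k2 : k.-1.-1 < k by apply: leq_ltn_trans lt_k1; apply: leq_pred.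
have [kept_j2 | del_j2] := boolP (kept (o + j2)).
  apply: rt_trans (IHk _ lt_k2 _ lt_j2m j2_at kept_j2) (reach_block_edge o_start _ _ _ _ _) => //.
  by apply: (block_edge_cyc lt_j2m lt_jm j2_j) => //; rewrite small_lt_3n.
have ne_j2i : j2 != i by apply: contraNneq del_j2 => ->.
have k2_gt0 := cyc_at_pos lt_im lt_j2m ne_j2i j2_at.
have [j3 lt_j3m j3_j2] := cyclic_pred lt_j2m.
have j3_at := cyc_at_pred lt_j3m k2_gt0 j2_at j3_j2.
have j3_j1 : cyc_at j3 (1 + 1) j1 by apply: cyc_at_add j3_j2 j2_j1 => //; rewrite small_lt_m.
have j3_j : cyc_at j3 (1 + 1 + 1) j by apply: cyc_at_add j3_j2 j2_j => //; rewrite small_lt_m.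
have lt_k3 : k.-1.-1.-1 < k by apply: leq_ltn_trans lt_k2; apply: leq_pred.
have ne_j21 : o + j2 != o + j1 by rewrite eqn_add2l; apply: cyc_at_neq j2_j1 => //; rewrite small_lt_m.
have kept_j3 : kept (o + j3).
  apply: kept_other del_j2 del_j1 ne_j21 _ _; rewrite eqn_add2l.
    by apply: cyc_at_neq j3_j2 => //; rewrite small_lt_m.
  by apply: cyc_at_neq j3_j1 => //; rewrite small_lt_m.
apply: rt_trans (IHk _ lt_k3 _ lt_j3m j3_at kept_j3) _.
have [edge_j3j | no_edge] := boolP (block_edge j3 j); first exact: reach_block_edge.
have /andP[/eqP n1 lt_j32] : (n == 1) && (j3 < 2).
  by apply: contraNT no_edge => /(block_step3_cond n_gt0); apply: (block_edge_cyc lt_j3m lt_jm j3_j).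
rewrite (cyc_at_three n1 lt_j32 lt_jm j3_j) addnA in kept_j *.
by apply: reach_hub_detour => //; apply: (kept_hub o_start lt_j2m lt_j1m ne_j21) => //; rewrite leq_addr.
Qed.

Lemma deleted_pairE x y : ~~ kept x -> ~~ kept y -> x != y ->
  ((a == x) && (b == y)) || ((a == y) && (b == x)).
Proof. rewrite /kept; lia. Qed.

Lemma adj_deleted_pair x y : ~~ kept x -> ~~ kept y -> x != y -> adj x y || adj y x.
Proof. by move=> /deleted_pairE/[apply]/[apply] /orP[] /andP[/eqP <- /eqP <-]; rewrite adj_ab ?orbT. Qed.

Lemma deleted_of_blocked x y u w : ~~ (kept x && kept u) -> ~~ (kept y && kept w) ->
  [&& x != y, x != w, u != y & u != w] ->
  ~~ (adj x w || adj w x) -> ~~ (adj u y || adj y u) -> ~~ (adj u w || adj w u) ->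
  ~~ kept x && ~~ kept y.
Proof.
move=> /nandP[del_x | del_u] /nandP[del_y | del_w] /and4P[xy xw uy uw] xw_free uy_free uw_free.
- by rewrite del_x del_y.
- by rewrite (adj_deleted_pair del_x del_w) in xw_free.
- by rewrite (adj_deleted_pair del_u del_y) in uy_free.
- by rewrite (adj_deleted_pair del_u del_w) in uw_free.
Qed.

Lemma deleted_fragile_pair o p x y : block_start o -> (p == 0) || (p == 3 * n) -> n = 1 ->
  x = o + p -> y = o + p + n -> ~~ kept x -> ~~ kept y -> False.
Proof.
move=> o_start p_start n1 -> -> del_x del_y; have ne_xy : o + p != o + p + n by lia.
case/orP: (deleted_pairE del_x del_y ne_xy) => /andP[/eqP ea /eqP eb].
  by move: robust_ab; rewrite /fragile ea eb; lia.
by move: adj_ab; rewrite ea eb -addnA adj_block_block // /block_edge /circulant; lia.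
Qed.

Lemma block_exit o : block_start o ->
  exists i h, [/\ i < m, (h == hubU) || (h == hubW), kept (o + i), kept h & adj (o + i) h].
Proof.
move=> o_start; have [lt_0m lt_1m lt_nm] : [/\ 0 < m, 1 < m & n < m] by split; lia.
have [/andP[kept_0 kept_U] | blocked_U] := boolP (kept (o + 0) && kept hubU).
  by exists 0, hubU; rewrite eqxx adj_block_hubU.
have [/andP[kept_n kept_W] | blocked_W] := boolP (kept (o + n) && kept hubW).
  by exists n, hubW; rewrite eqxx orbT adj_block_hubW //; split=> //; lia.
have /andP[del_0 del_n] : ~~ kept (o + 0) && ~~ kept (o + n).
  apply: deleted_of_blocked blocked_U blocked_W _ _ _ _; first by apply/and4P; split; lia.
  - by rewrite adj_block_hubW // adj_hubW_block //; lia.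
  - by rewrite adj_hubU_block // adj_block_hubU //; lia.
  - by case: adj_hubs => -> ->.
have [n1 | n_gt1] : n = 1 \/ 1 < n by lia.
  by case: (deleted_fragile_pair o_start _ n1 erefl _ del_0 del_n); rewrite ?eqxx ?addn0.
have ne_0n : o + 0 != o + n by lia.
exists 1, hubU; rewrite eqxx adj_block_hubU //.
by split=> //; apply: kept_other del_0 del_n ne_0n _ _; lia.
Qed.

Lemma block_entry o : block_start o ->
  exists i h, [/\ i < m, (h == hubU) || (h == hubW), kept (o + i), kept h & adj h (o + i)].
Proof.
move=> o_start; have [lt_3m lt_31m lt_4m] : [/\ 3 * n < m, 3 * n + 1 < m & 4 * n < m] by split; lia.
have [/andP[kept_3 kept_U] | blocked_U] := boolP (kept (o + 3 * n) && kept hubU).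
  by exists (3 * n), hubU; rewrite eqxx adj_hubU_block //; split=> //; lia.
have [/andP[kept_4 kept_W] | blocked_W] := boolP (kept (o + 4 * n) && kept hubW).
  by exists (4 * n), hubW; rewrite eqxx orbT adj_hubW_block //; split=> //; lia.
have /andP[del_3 del_4] : ~~ kept (o + 3 * n) && ~~ kept (o + 4 * n).
  apply: deleted_of_blocked blocked_U blocked_W _ _ _ _; first by apply/and4P; split; lia.
  - by rewrite adj_block_hubW // adj_hubW_block //; lia.
  - by rewrite adj_hubU_block // adj_block_hubU //; lia.
  - by case: adj_hubs => -> ->.
have [n1 | n_gt1] : n = 1 \/ 1 < n by lia.
  by case: (deleted_fragile_pair o_start _ n1 erefl _ del_3 del_4); rewrite ?eqxx ?orbT //; lia.
have ne_34 : o + 3 * n != o + 4 * n by lia.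
exists (3 * n + 1), hubU; rewrite eqxx adj_hubU_block //.
by split=> //; [apply: kept_other del_3 del_4 ne_34 _ _ | apply: kept_other del_3 del_4 ne_34 _ _ | ]; lia.
Qed.

Lemma reach_hubs : kept hubU -> kept hubW -> reach hubU hubW /\ reach hubW hubU.
Proof.
move=> kept_U kept_W.
have [o' o'_start clean] : exists2 o', block_start o' & forall i, i < m -> kept (o' + i).
  move: kept_U kept_W; rewrite /kept.
  case/adjP: adj_ab => [o o_start a_in b_in _ | -> | -> | -> | ->]; rewrite ?eqxx ?andbF //= => _ _.
  by have [o0 | o_ne0] := eqVneq o 0; [exists m | exists 0]; rewrite ?eqxx ?orbT // => i lt_im; lia.
split.
- apply: (@rt_trans _ _ _ (o' + 3 * n)); first by apply: reach_adj; rewrite ?adj_hubU_block ?clean //; lia.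
  apply: (@rt_trans _ _ _ (o' + n)); first by apply: reach_in_block; rewrite ?clean //; lia.
  by apply: reach_adj; rewrite ?adj_block_hubW ?clean //; lia.
- apply: (@rt_trans _ _ _ (o' + 4 * n)); first by apply: reach_adj; rewrite ?adj_hubW_block ?clean //; lia.
  apply: (@rt_trans _ _ _ (o' + 0)); first by apply: reach_in_block; rewrite ?clean //; lia.
  by apply: reach_adj; rewrite ?adj_block_hubU ?clean //; lia.
Qed.

Lemma reach_to_hub x : x < N -> kept x ->
  exists2 h, (h == hubU) || (h == hubW) & kept h /\ reach x h.
Proof.
case/vertexP=> [o i o_start lt_im -> kept_x | -> kept_x | -> kept_x].
- have [i' [h [lt_i'm hub_h kept_i' kept_h adj_i'h]]] := block_exit o_start.
  exists h => //; split=> //; apply: rt_trans (reach_in_block o_start lt_im lt_i'm kept_x kept_i') _.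
  exact: reach_adj.
- by exists hubU; rewrite ?eqxx //; split=> //; apply: rt_refl.
- by exists hubW; rewrite ?eqxx ?orbT //; split=> //; apply: rt_refl.
Qed.

Lemma reach_from_hub y : y < N -> kept y ->
  exists2 h, (h == hubU) || (h == hubW) & kept h /\ reach h y.
Proof.
case/vertexP=> [o i o_start lt_im -> kept_y | -> kept_y | -> kept_y].
- have [i' [h [lt_i'm hub_h kept_i' kept_h adj_hi']]] := block_entry o_start.
  exists h => //; split=> //; apply: rt_trans (reach_in_block o_start lt_i'm lt_im kept_i' kept_y).
  exact: reach_adj.
- by exists hubU; rewrite ?eqxx //; split=> //; apply: rt_refl.
- by exists hubW; rewrite ?eqxx ?orbT //; split=> //; apply: rt_refl.
Qed.

Lemma reach_kept x y : x < N -> y < N -> kept x -> kept y -> reach x y.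
Proof.
move=> lt_xN lt_yN kept_x kept_y.
have [h hub_h [kept_h reach_xh]] := reach_to_hub lt_xN kept_x.
have [h' hub_h' [kept_h' reach_h'y]] := reach_from_hub lt_yN kept_y.
apply: rt_trans reach_xh _; apply: rt_trans _ reach_h'y.
have [<- | ne_hh'] := eqVneq h h'; first exact: rt_refl.
case/orP: hub_h hub_h' ne_hh' kept_h kept_h' => /eqP-> /orP[] /eqP->; rewrite ?eqxx // => _ kept_h kept_h'.
- by case: (reach_hubs kept_h kept_h').
- by case: (reach_hubs kept_h' kept_h).
Qed.

End Robustness.

Lemma fragile_matching a b c d : fragile a b -> fragile c d ->
  [|| a == c, a == d, b == c | b == d] -> (a == c) && (b == d).
Proof. rewrite /fragile; lia. Qed.

Lemma spare_adj x y : 0 < n -> exists p,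
  [/\ adj p (p + 1), ~~ fragile p (p + 1) & [&& p != x, p != y, p + 1 != x & p + 1 != y]].
Proof.
move=> n_gt0.
have [o o_start [out_x out_y]] : exists2 o, block_start o & ~~ (o <= x < o + m) /\ ~~ (o <= y < o + m).
  have [x_in | x_out] := boolP (0 <= x < m).
    have [y_in | y_out] := boolP (m <= y < 2 * m); [exists (2 * m) | exists m]; rewrite ?eqxx ?orbT //; lia.
  have [y_in | y_out] := boolP (0 <= y < m); [|by exists 0].
  have [x_in' | x_out'] := boolP (m <= x < 2 * m); [exists (2 * m) | exists m]; rewrite ?eqxx ?orbT //; lia.
exists (o + 2); rewrite -addnA adj_block_block //; try lia.
by split; [rewrite /block_edge /circulant | rewrite /fragile |]; lia.
Qed.

Lemma connect_of_reach (a b : 'I_N) u v : clos_refl_trans nat (avoid_adj a b) u v ->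
  forall x y : 'I_N, val x = u -> val y = v -> connect (induced graph (~: [set a; b])) x y.
Proof.
move=> reach_uv; elim: (clos_rt_rt1n _ _ _ _ reach_uv) => {u v reach_uv} [w | u w v avoid_uw _ IHwv] x y ux vy.
  by rewrite (val_inj (etrans ux (esym vy))) connect0.
case/and3P: (avoid_uw) => /adj_bounded /andP[_ lt_wN] _ _.
apply: connect_trans (IHwv (Ordinal lt_wN) y erefl vy); apply: connect1.
by move: avoid_uw; rewrite /avoid_adj /kept /induced /graph /= !inE -!(inj_eq val_inj) /= ux; lia.
Qed.

Lemma graph_strongly_well_connected : 0 < n -> strongly_well_connected graph.
Proof.
move=> n_gt0.
have kept_val (a b x : 'I_N) : x \notin [set a; b] -> kept a b x.
  by rewrite !inE -!(inj_eq val_inj) negb_or.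
apply: (@strongly_well_connected_of_robust _ _ (fun a b : 'I_N => fragile a b)); last by rewrite card_ord; lia.
- move=> a b adj_ab robust_ab x y x_ab y_ab.
  apply: (connect_of_reach (u := x) (v := y)) => //.
  by apply: (reach_kept n_gt0 adj_ab robust_ab); rewrite ?kept_val.
- move=> x y; have [p [adj_p robust_p fresh_p]] := spare_adj x y n_gt0.
  have /andP[lt_p lt_p1] := adj_bounded adj_p.
  exists (Ordinal lt_p), (Ordinal lt_p1); split=> //.
  by rewrite disjoint_set2 !inE -!(inj_eq val_inj) /=; lia.
- move=> a b c d frag_ab frag_cd; rewrite disjoint_set2 !inE -!(inj_eq val_inj) /= => shared.
  have shared' : [|| a == c :> nat, a == d :> nat, b == c :> nat | b == d :> nat] by lia.
  by have /andP[/eqP/val_inj -> /eqP/val_inj ->] := fragile_matching frag_ab frag_cd shared'.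
Qed.

End Construction.

Theorem proposition7p1 (n : nat) : 0 < n ->
  exists e : rel 'I_(18 * n + 5),
    [/\ oriented e, regular e (3 * n), strongly_well_connected e
      & ~ hamiltonian e].
Proof.
move=> n_gt0; exists (@graph n); split.
- exact: graph_oriented.
- exact: graph_regular.
- exact: graph_strongly_well_connected.
- exact: graph_not_hamiltonian.
Qed.
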